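(* If $G$ is a $3$-edge-connected graph admitting a nowhere-zero $4$-flow, then $fn(G)\le 2$. In particular, $fn(G)=2$ for every $3$-edge-connected $3$-edge-colourable graph $G$.
   Context: All graphs are finite. An orientation is strong if for every ordered pair of distinct vertices $u,v$ there is a directed $uv$-path. An edge $e$ is deletable in an orientation $(G,o)$ if the restriction of $o$ to $E(G)\setminus\{e\}$ is a strong orientation of $G-e$. For a $3$-edge-connected graph $G$, the Frank number $fn(G)$ is the minimum number $k$ such that $G$ admits $k$ orientations with the property that every edge of $G$ is deletable in at least one of them. A nowhere-zero $k$-flow on $G$ is a pair $(o,f)$ of an orientation $o$ and a map $f:E(G)\to\{\pm1,\dots,\pm(k-1)\}$ such that at every vertex the sum of $f$ over incoming edges equals the sum of $f$ over outgoing edges. *)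

From mathcomp Require Import all_boot all_order all_algebra.
Set Implicit Arguments. Unset Strict Implicit. Unset Printing Implicit Defensive.
Import Order.TTheory GRing.Theory Num.Theory.

(* A finite multigraph (parallel edges and loops allowed) is given by a finite
   vertex type V, a finite edge type E and the two ends [s e], [t e] of every
   edge. *)

Definition ohead (V E : finType) (s t : E -> V) (o : E -> bool) (e : E) : V :=
  if o e then t e else s e.
Definition otail (V E : finType) (s t : E -> V) (o : E -> bool) (e : E) : V :=
  if o e then s e else t e.

Definition darc (V E : finType) (s t : E -> V) (F : {set E}) (o : E -> bool) : rel V :=
  fun x y => [exists e in F, (otail s t o e == x) && (ohead s t o e == y)].

Definition strong_on (V E : finType) (s t : E -> V) (F : {set E}) (o : E -> bool) : Prop :=
  forall u v : V, u != v -> connect (darc s t F o) u v.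

Definition deletable (V E : finType) (s t : E -> V) (o : E -> bool) (e : E) : Prop :=
  strong_on s t (setT :\ e) o.

Definition frank_cover (V E : finType) (s t : E -> V) (k : nat) : Prop :=
  exists os : 'I_k -> E -> bool, forall e : E, exists i : 'I_k, deletable s t (os i) e.

Definition uarc (V E : finType) (s t : E -> V) (F : {set E}) : rel V :=
  fun x y => [exists e in F, ((s e == x) && (t e == y)) || ((s e == y) && (t e == x))].

Definition edge_connected (V E : finType) (s t : E -> V) (k : nat) : Prop :=
  1 < #|V| /\
  forall F : {set E}, #|F| < k -> forall u v : V, connect (uarc s t (~: F)) u v.

Definition nz_flow (V E : finType) (s t : E -> V) (k : nat) : Prop :=
  exists (o : E -> bool) (f : E -> int),
    (forall e, f e != 0%R /\ (`|f e| < k%:Z)%R) /\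
    forall v : V, (\sum_(e | ohead s t o e == v) f e)%R = (\sum_(e | otail s t o e == v) f e)%R.

Definition edge_colourable (V E : finType) (s t : E -> V) (k : nat) : Prop :=
  exists c : E -> 'I_k,
    (forall e, s e != t e) /\
    forall e e' : E, e != e' ->
      [|| s e == s e', s e == t e', t e == s e' | t e == t e'] -> c e != c e'.

From Pilot Require Import Defs.
From mathcomp Require Import all_boot all_order all_algebra.
From mathcomp Require Import zify ring.
Set Implicit Arguments. Unset Strict Implicit. Unset Printing Implicit Defensive.
Import Order.TTheory GRing.Theory Num.Theory.

(* The central fact is [positive_flow_deletable]: in a
   3-edge-connected graph, an edge of value 1 in a positive flow is
   deletable, by counting the flow across a cut.  Reorienting negative edges
   turns this into: an edge of value +-1 in a nowhere-zero flow is deletable.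
   Given two flows [pa], [pb] with values in {-1,0,1} and covering supports,
   the flows [pa + 2 pb] and [pb - 2 pa] are nowhere zero and every edge has
   value +-1 in one of them, giving two orientations that form a Frank pair.
   Such [pa], [pb] come from [even_boundary_lift]: a weighting with even
   boundary is congruent mod 2 to a {-1,0,1}-flow (peel off cycles of odd
   edges).  A nowhere-zero 4-flow [f] gives [pa = f mod 2] and [pb] from
   [(f - pa) / 2]; a 3-edge-colouring gives them from two pairs of colour
   classes.  Finally, a loopless degree-3 vertex shows that a single
   orientation never suffices. *)

Section Multigraph.
Variables (V E : finType) (s t : E -> V).
Local Notation head := (Defs.ohead s t).
Local Notation tail := (Defs.otail s t).
Local Open Scope ring_scope.

(* The signed incidence of [e] at [v] under [o]: +1 if [e] enters [v], -1 if
   it leaves [v], 0 otherwise (and for loops). *)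
Definition incidence (o : E -> bool) (v : V) (e : E) : int :=
  (head o e == v)%:R - (tail o e == v)%:R.

(* Net inflow of the edge weighting [h] at [v]; [h] is a flow iff it is 0. *)
Definition boundary (o : E -> bool) (h : E -> int) (v : V) : int :=
  \sum_e incidence o v e * h e.

Lemma boundary_lin o a b (x y : int) v :
  boundary o (fun e => x * a e + y * b e) v = x * boundary o a v + y * boundary o b v.
Proof. by rewrite /boundary !mulr_sumr -big_split; apply: eq_bigr => e _ /=; ring. Qed.

Lemma sum_indicator (P : pred E) (h : E -> int) :
  \sum_e (P e)%:R * h e = \sum_(e | P e) h e.
Proof.
by rewrite [RHS]big_mkcond; apply: eq_bigr => e _; case: (P e); rewrite ?mul1r ?mul0r.
Qed.

Lemma sum_indicator_card (P : pred E) : \sum_e ((P e)%:R : int) = #|[set e | P e]|%:R.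
Proof.
rewrite -natr_sum -sum1_card; congr _%:R; rewrite [RHS]big_mkcond.
by apply: eq_bigr => e _; rewrite inE; case: (P e).
Qed.

Lemma conservation_boundary o h :
  (forall v, \sum_(e | head o e == v) h e = \sum_(e | tail o e == v) h e) ->
  forall v, boundary o h v = 0.
Proof.
move=> Hcons v; rewrite /boundary /incidence.
under eq_bigr do rewrite mulrBl.
by rewrite sumrB !sum_indicator Hcons subrr.
Qed.

Definition reorient (b o : E -> bool) (e : E) : bool := if b e then ~~ o e else o e.
Definition negate_on (b : E -> bool) (h : E -> int) (e : E) : int :=
  if b e then - h e else h e.

Lemma boundary_negate_on b o h v :
  boundary (reorient b o) h v = boundary o (negate_on b h) v.
Proof.
rewrite /boundary; apply: eq_bigr => e _.
rewrite /incidence /negate_on /reorient /Defs.ohead /otail.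
by case: (b e); case: (o e) => //=; rewrite mulrN -mulNr opprB.
Qed.

Lemma sum_eq_in (X : {set V}) a : \sum_(v in X) ((a == v)%:R : int) = (a \in X)%:R.
Proof.
case: (boolP (a \in X)) => Ha; last first.
  by rewrite big1 // => v Hv; case: eqP => // Hav; rewrite Hav Hv in Ha.
rewrite (bigD1 a) //= eqxx big1 ?addr0 // => v /andP[_].
by rewrite eq_sym => /negbTE->.
Qed.

Lemma boundary_cut o h (X : {set V}) : \sum_(v in X) boundary o h v =
  \sum_e ((head o e \in X)%:R - (tail o e \in X)%:R) * h e.
Proof.
rewrite /boundary exchange_big /=; apply: eq_bigr => e _.
by rewrite -mulr_suml /incidence sumrB !sum_eq_in.
Qed.

Lemma oriented_ends o e :
  ((head o e == t e) && (tail o e == s e)) || ((head o e == s e) && (tail o e == t e)).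
Proof. by rewrite /Defs.ohead /otail; case: (o e); rewrite !eqxx ?orbT. Qed.

Lemma oriented_crossing o (X : {set V}) e :
  ((head o e \in X) != (tail o e \in X)) = ((s e \in X) != (t e \in X)).
Proof. by rewrite /Defs.ohead /otail; case: (o e) => //; rewrite eq_sym. Qed.

Lemma crossing_ge3 (X : {set V}) u v : edge_connected s t 3 ->
  u \in X -> v \notin X -> (3 <= #|[set e | (s e \in X) != (t e \in X)]|)%N.
Proof.
move=> [_ Hconn] Hu Hv; rewrite leqNgt; apply/negP => /Hconn /(_ u v) Huv.
have closedX : closed (uarc s t (~: [set e | (s e \in X) != (t e \in X)])) X.
  move=> x y /existsP[e /andP[]]; rewrite in_setC inE negbK => /eqP Heq.
  by case/orP => /andP[/eqP<- /eqP<-].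
by move: (closed_connect closedX Huv); rewrite Hu (negbTE Hv).
Qed.

(* Otherwise the set [X] of vertices reachable
   from some [u] in [G - e0] misses some [v]; no edge but [e0] leaves [X],
   while at least two edges enter it, so the flow into [X] would be positive. *)
Lemma positive_flow_deletable o h e0 : edge_connected s t 3 ->
  (forall v, boundary o h v = 0) -> (forall e, 0 < h e) -> h e0 = 1 ->
  deletable s t o e0.
Proof.
move=> Hconn Hflow Hpos Hone u v Huv; apply/negPn/negP => Hunreach.
set X := [set z | connect (darc s t (setT :\ e0) o) u z].
have outX : forall e, e != e0 -> tail o e \in X -> head o e \in X.
  move=> e He; rewrite !inE => Hu; apply: connect_trans Hu (connect1 _).
  by apply/existsP; exists e; rewrite !inE He !eqxx.
have [uX vX] : u \in X /\ v \notin X by rewrite !inE connect0.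
clearbody X.
set In := [set e | (head o e \in X) && (tail o e \notin X)].
have HIn : (2 <= #|In|)%N.
  have sub : [set e | (s e \in X) != (t e \in X)] \subset e0 |: In.
    apply/subsetP => e; rewrite !inE -(oriented_crossing o).
    case: (boolP (e == e0)) => //= He.
    case Ht: (tail o e \in X); case Hh: (head o e \in X) => //=.
    by rewrite outX in Hh.
  have := subset_leq_card sub; rewrite cardsU1.
  have := crossing_ge3 Hconn uX vX.
  by case: (e0 \in In) => /=; lia.
have Hcut : \sum_e ((e \in In)%:R - (e == e0)%:R : int) <=
    \sum_e ((head o e \in X)%:R - (tail o e \in X)%:R) * h e.
  apply: ler_sum => e _; rewrite inE; have := Hpos e; have := outX e.
  case: (head o e \in X); case: (tail o e \in X);
    case: eqP => [->|ne] /=; rewrite ?Hone => //; lia.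
move: Hcut; rewrite -boundary_cut.
have -> : \sum_(w in X) boundary o h w = 0 by apply: big1 => w _; exact: Hflow.
rewrite sumrB !sum_indicator_card (_ : [set e | e == e0] = [set e0]); last first.
  by apply/setP => e; rewrite !inE.
have -> : [set e | e \in In] = In by apply/setP => e; rewrite inE.
rewrite cards1; lia.
Qed.

(* Reorienting the edges where a flow is negative makes it positive, so an
   edge of value [1] or [-1] in a nowhere-zero flow is deletable. *)
Lemma unit_flow_deletable o h e0 : edge_connected s t 3 ->
  (forall v, boundary o h v = 0) -> (forall e, h e != 0) -> `|h e0| = 1 ->
  deletable s t (reorient (fun e => h e < 0) o) e0.
Proof.
move=> Hconn Hflow Hnz Hunit.
apply: (positive_flow_deletable (h := negate_on (fun e => h e < 0) h)) => //.
- move=> v; rewrite boundary_negate_on -[RHS](Hflow v) /boundary.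
  by apply: eq_bigr => e _; rewrite /negate_on; case: (h e < 0); rewrite ?opprK.
- by move=> e; rewrite /negate_on; have := Hnz e; case: ifP => Hneg; lia.
- by rewrite /negate_on; move: Hunit; case: ifP => Hneg; lia.
Qed.

(* Two flows with values in {-1,0,1} whose supports cover [E] give a Frank
   pair: [h1 = pa + 2 pb] and [h2 = pb - 2 pa] are nowhere-zero flows, and
   every edge has value +-1 in one of them. *)
Lemma two_unit_flows_frank_cover o (pa pb : E -> int) : edge_connected s t 3 ->
  (forall v, boundary o pa v = 0) -> (forall v, boundary o pb v = 0) ->
  (forall e, `|pa e| <= 1) -> (forall e, `|pb e| <= 1) ->
  (forall e, pa e != 0 \/ pb e != 0) -> frank_cover s t 2.
Proof.
move=> Hconn Fa Fb Ba Bb Hcover.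
pose h1 e := 1 * pa e + 2 * pb e.
pose h2 e := 1 * pb e + (-2) * pa e.
have F1 : forall v, boundary o h1 v = 0 by move=> v; rewrite boundary_lin Fa Fb; ring.
have F2 : forall v, boundary o h2 v = 0 by move=> v; rewrite boundary_lin Fa Fb; ring.
have range e : [/\ h1 e != 0, h2 e != 0 & `|h1 e| = 1 \/ `|h2 e| = 1].
  by have := Ba e; have := Bb e; have := Hcover e; rewrite /h1 /h2; split; lia.
exists (fun i : 'I_2 => if i == ord0 then reorient (fun e => h1 e < 0) o
                         else reorient (fun e => h2 e < 0) o) => e.
have [_ _ [H1|H2]] := range e.
  by exists ord0; apply: unit_flow_deletable => // x; have [] := range x.
by exists ord_max; apply: unit_flow_deletable => // x; have [] := range x.
Qed.

Definition joins (e : E) (a b : V) : bool :=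
  ((s e == a) && (t e == b)) || ((s e == b) && (t e == a)).

(* The sign with which a walk leaving [a] along [e] traverses [e] under [o]. *)
Definition walk_sign (o : E -> bool) (e : E) (a : V) : int :=
  if tail o e == a then 1 else -1.

Lemma incidence_walk_sign o e a b v : joins e a b ->
  incidence o v e * walk_sign o e a = (b == v)%:R - (a == v)%:R.
Proof.
rewrite /incidence /walk_sign /Defs.ohead /otail.
case/orP => /andP[/eqP<- /eqP<-];
  (case: (s e =P t e) => [->|ne]; first by case: (o e); rewrite ?eqxx subrr mul0r);
  have /negbTE ts : t e != s e by apply/eqP => H; apply: ne.
all: have /negbTE st : s e != t e by apply/eqP.
all: by case: (o e); rewrite /= ?eqxx ?ts ?st ?mulr1 // mulrN1 opprB.
Qed.

Section WalkFlows.
Variables (o : E -> bool) (A : {set E}) (e0 : E).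

Definition adjA : rel V := fun a b => [exists e, [&& e \in A, e != e0 & joins e a b]].
Definition adjA_edge a b : E := odflt e0 [pick e | [&& e \in A, e != e0 & joins e a b]].

Lemma adjA_edgeP a b : adjA a b ->
  [&& adjA_edge a b \in A, adjA_edge a b != e0 & joins (adjA_edge a b) a b].
Proof.
rewrite /adjA_edge; case: pickP => [e He|H] //=.
by move=> /existsP[e]; rewrite H.
Qed.

Fixpoint walk_flow (a : V) (p : seq V) (e : E) : int :=
  if p is b :: p' then
    (adjA_edge a b == e)%:R * walk_sign o (adjA_edge a b) a + walk_flow b p' e
  else 0.

Lemma walk_flow_boundary a p v : path adjA a p ->
  boundary o (walk_flow a p) v = (last a p == v)%:R - (a == v)%:R.
Proof.
elim: p a => [|b p IH] a /=.
  by move=> _; rewrite /boundary big1 ?subrr // => e _; rewrite mulr0.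
move=> /andP[Hab Hp]; set f := adjA_edge a b.
rewrite /boundary (eq_bigr (fun e => (f == e)%:R * (incidence o v f * walk_sign o f a)
     + incidence o v e * walk_flow b p e)); last first.
  by move=> e _; case: eqP => [->|_]; rewrite ?mul1r ?mul0r; ring.
rewrite big_split /= -/(boundary _ _ _) IH // (bigD1 f) //= eqxx mul1r big1 ?addr0.
  by have /and3P[_ _ /incidence_walk_sign->] := adjA_edgeP Hab; ring.
by move=> e /negbTE; rewrite eq_sym => ->; rewrite mul0r.
Qed.

Lemma walk_flow_off a p e : path adjA a p ->
  (s e \notin a :: p) || (t e \notin a :: p) -> walk_flow a p e = 0.
Proof.
elim: p a => [|b p IH] a //= /andP[Hab Hp] Hoff.
case: (boolP (adjA_edge a b == e)) => Hf.
  have := adjA_edgeP Hab; rewrite (eqP Hf) => /and3P[_ _ /orP[]/andP[/eqP Hs /eqP Ht]];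
  by move: Hoff; rewrite !in_cons Hs Ht !eqxx ?orbT.
rewrite mul0r add0r IH //.
by case/orP: Hoff; rewrite in_cons negb_or => /andP[_ ->] //; rewrite orbT.
Qed.

Lemma walk_flow_values a p e : path adjA a p -> uniq (a :: p) ->
  walk_flow a p e = 0 \/ (`|walk_flow a p e| = 1 /\ e \in A /\ e != e0).
Proof.
elim: p a => [|b p IH] a /=; first by left.
move=> /andP[Hab Hp] /andP[Ha Hu].
case: (boolP (adjA_edge a b == e)) => Hf; last by rewrite mul0r add0r; exact: IH.
have := adjA_edgeP Hab; rewrite (eqP Hf) => /and3P[HA He0 Hj].
rewrite (@walk_flow_off b p e) //; last first.
  by case/orP: Hj => /andP[/eqP-> /eqP->]; rewrite Ha ?orbT.
by right; rewrite /walk_sign; case: ifP.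
Qed.

End WalkFlows.

Definition odd_edges (g : E -> int) : {set E} := [set e | odd `|g e|%N].

(* If [g] has even boundary everywhere, every odd edge [e0] lies on a cycle of
   odd edges: otherwise the component [X] of [t e0] in the odd edges minus
   [e0] is crossed by [e0] and by even edges only, so the boundary of [g]
   summed over [X] would be odd. *)
Lemma odd_edge_closes_walk o g e0 : (forall v, (2 %| boundary o g v)%Z) ->
  e0 \in odd_edges g -> connect (adjA (odd_edges g) e0) (t e0) (s e0).
Proof.
move=> Heven He0; apply/negPn/negP => Hdisc.
set A := odd_edges g in He0 Hdisc *.
set X := [set z | connect (adjA A e0) (t e0) z].
have sameX : forall e, e \in A -> e != e0 -> (s e \in X) = (t e \in X).
  move=> e HA He; rewrite !inE; apply/idP/idP => H; apply: connect_trans H (connect1 _);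
    by apply/existsP; exists e; rewrite HA He /joins !eqxx ?orbT.
have [tX sX] : t e0 \in X /\ s e0 \notin X by rewrite !inE connect0.
clearbody X.
have Hsum : (2 %| \sum_(v in X) boundary o g v)%Z.
  by apply: rpred_sum => v _; exact: Heven.
rewrite boundary_cut (bigD1 e0) //= in Hsum.
have Hrest : (2 %| \sum_(e | e != e0)
    ((head o e \in X)%:R - (tail o e \in X)%:R) * g e)%Z.
  apply: rpred_sum => e He; case: (boolP (e \in A)) => HA.
    have := sameX e HA He; have := oriented_ends o e.
    by case/orP => /andP[/eqP-> /eqP->] ->; rewrite subrr mul0r.
  by move: HA; rewrite inE; case: (_ \in X); case: (_ \in X) => /=; lia.
move: He0 Hsum Hrest; rewrite inE; set S := \sum_(i | i != e0) _.
by have := oriented_ends o e0; case/orP => /andP[/eqP-> /eqP->];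
  rewrite tX (negbTE sX) /=; lia.
Qed.

(* Closing such a walk with [e0] gives a flow with values in {-1,0,1},
   supported on odd edges and nonzero on [e0]. *)
Lemma odd_cycle_flow o g e0 : (forall v, (2 %| boundary o g v)%Z) ->
  e0 \in odd_edges g -> exists chi : E -> int,
  [/\ forall v, boundary o chi v = 0,
      forall e, chi e = 0 \/ (`|chi e| = 1 /\ e \in odd_edges g)
    & `|chi e0| = 1].
Proof.
move=> Heven He0; set A := odd_edges g.
have [p [Hp Hu Hlast]] : exists p, [/\ path (adjA A e0) (t e0) p,
    uniq (t e0 :: p) & last (t e0) p = s e0].
  case/connectP: (odd_edge_closes_walk Heven He0) => q Hq ->.
  by case/shortenP: Hq => p Hp Hu _; exists p.
pose chi e := (e == e0)%:R * walk_sign o e0 (s e0) + walk_flow o A e0 (t e0) p e.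
have chi_e0 : `|chi e0| = 1.
  rewrite /chi eqxx mul1r; case: (walk_flow_values o e0 Hp Hu) => [->|[_ [_ /negP]]] //.
  by rewrite addr0 /walk_sign; case: ifP.
exists chi; split => //.
- move=> v; rewrite /boundary.
  rewrite (eq_bigr (fun e => (e == e0)%:R * (incidence o v e0 * walk_sign o e0 (s e0))
     + incidence o v e * walk_flow o A e0 (t e0) p e)); last first.
    by move=> e _; rewrite /chi; case: eqP => [->|_]; rewrite ?mul1r ?mul0r; ring.
  rewrite big_split /= -/(boundary _ _ _) walk_flow_boundary // Hlast.
  rewrite (bigD1 e0) //= eqxx mul1r big1 ?addr0; last first.
    by move=> e /negbTE ->; rewrite mul0r.
  by rewrite (@incidence_walk_sign o e0 (s e0) (t e0) v) /joins ?eqxx //; ring.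
- move=> e; case: (eqVneq e e0) => [->|ne]; first by right.
  rewrite /chi (negbTE ne) mul0r add0r.
  by case: (walk_flow_values o e Hp Hu) => [|[? [? _]]]; [left|right].
Qed.

(* Every integer weighting with even boundary is congruent mod 2 to a flow
   with values in {-1,0,1}: subtract cycle flows through odd edges until no
   odd edge is left. *)
Lemma even_boundary_lift o g : (forall v, (2 %| boundary o g v)%Z) ->
  exists pa k : E -> int, [/\ forall v, boundary o pa v = 0,
    forall e, `|pa e| <= 1 & forall e, g e = pa e + 2 * k e].
Proof.
move: {2}#|odd_edges g|.+1 (ltnSn #|odd_edges g|) => n.
elim: n g => [//|n IH] g Hcard Heven.
case: (set_0Vmem (odd_edges g)) => [Hnone|[e0 He0]].
  exists (fun _ => 0), (fun e => (g e %/ 2)%Z); split => // [v|e].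
    by rewrite /boundary big1 // => e _; rewrite mulr0.
  have : e \notin odd_edges g by rewrite Hnone inE.
  by rewrite inE; lia.
have [chi [Fchi Hchi chi_e0]] := odd_cycle_flow Heven He0.
pose g' e := 1 * g e + (-1) * chi e.
have Heven' v : (2 %| boundary o g' v)%Z.
  by rewrite boundary_lin Fchi; have := Heven v; lia.
have Hcard' : (#|odd_edges g'| < n)%N.
  rewrite -ltnS; apply: leq_trans Hcard; apply: proper_card; apply/properP; split.
    by apply/subsetP => e; rewrite !inE /g'; case: (Hchi e) => [|[_]]; rewrite ?inE; lia.
  by exists e0 => //; rewrite inE /g'; move: He0; rewrite inE; lia.
have [pa [k [Fa Ba Ka]]] := IH g' Hcard' Heven'.
exists (fun e => 1 * pa e + 1 * chi e), k; split.
- by move=> v; rewrite boundary_lin Fa Fchi; ring.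
- move=> e; have := Ka e; have := Ba e; rewrite /g'.
  by case: (Hchi e) => [|[]]; rewrite ?inE; lia.
- by move=> e; have := Ka e; rewrite /g'; lia.
Qed.

(* First part of the theorem: a nowhere-zero 4-flow [f] splits as
   [f = pa + 2 pb + 4 k] with [pa], [pb] flows in {-1,0,1}, and [pa], [pb]
   cannot both vanish where [f] does not. *)
Lemma nz4flow_frank_cover : edge_connected s t 3 -> nz_flow s t 4 -> frank_cover s t 2.
Proof.
move=> Hconn [o [f [Hrange /conservation_boundary Ff]]].
have even0 : forall (h : E -> int) v, boundary o h v = 0 -> (2 %| boundary o h v)%Z.
  by move=> h v ->.
have [pa [ka [Fa Ba Ka]]] := even_boundary_lift (fun v => even0 _ v (Ff v)).
have Fk v : boundary o ka v = 0.
  have : boundary o f v = boundary o (fun e => 1 * pa e + 2 * ka e) v.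
    by apply: eq_bigr => e _; rewrite Ka; congr (_ * _); ring.
  by rewrite boundary_lin Fa Ff; lia.
have [pb [kb [Fb Bb Kb]]] := even_boundary_lift (fun v => even0 _ v (Fk v)).
apply: (two_unit_flows_frank_cover Hconn Fa Fb Ba Bb) => e.
by have := Hrange e; have := Ka e; have := Kb e; lia.
Qed.

Definition incident (v : V) : {set E} := [set e | (s e == v) || (t e == v)].

Lemma oriented_incident o e v : (tail o e == v) || (head o e == v) -> e \in incident v.
Proof. by rewrite inE /Defs.ohead /otail; case: (o e) => /orP[]->; rewrite ?orbT. Qed.

Lemma other_vertex (v : V) : (1 < #|V|)%N -> exists u, u != v.
Proof.
rewrite (cardD1 v) inE add1n ltnS => /card_gt0P [u].
by rewrite !inE => /andP[Hu _]; exists u.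
Qed.

(* Minimum degree of a 3-edge-connected graph: [incident v] contains the
   edges crossing the cut [{v}]. *)
Lemma incident_ge3 v : edge_connected s t 3 -> (3 <= #|incident v|)%N.
Proof.
move=> Hconn; have [u Hu] := other_vertex v Hconn.1.
have uX : u \notin [set v] by rewrite inE.
apply: leq_trans (crossing_ge3 Hconn (set11 v) uX) (subset_leq_card _).
by apply/subsetP => e; rewrite !inE; case: (s e == v); case: (t e == v).
Qed.

Lemma strong_exit F o (u v : V) : u != v -> strong_on s t F o ->
  exists2 e, e \in F & tail o e == v.
Proof.
move=> Huv /(_ v u); rewrite eq_sym => /(_ Huv) /connectP[[|w p] /= Hp Hl].
  by rewrite Hl eqxx in Huv.
by case/andP: Hp => /existsP[e /and3P[HF Ht _]]; exists e.
Qed.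

Lemma strong_entry F o (u v : V) : u != v -> strong_on s t F o ->
  {in incident v, forall e, s e != t e} ->
  exists2 e, e \in F & (head o e == v) && (tail o e != v).
Proof.
move=> Huv /(_ u v Huv) /connectP[p Hp Hl] Hloop.
case/lastP: p Hp Hl => [|q w] Hp Hl; first by rewrite /= Hl eqxx in Huv.
rewrite rcons_path last_rcons in Hp Hl; subst w.
case/andP: Hp => _ /existsP[e /and3P[HF _ Hh]]; exists e => //; rewrite Hh /=.
have Hinc : e \in incident v.
  by have := oriented_ends o e; rewrite inE (eqP Hh) => /orP[]/andP[/eqP<- _];
    rewrite eqxx ?orbT.
have := Hloop e Hinc; have := oriented_ends o e; rewrite (eqP Hh).
by case/orP => /andP[/eqP<- /eqP->] //; rewrite eq_sym.
Qed.

(* Hence, at a loopless vertex [v] of degree 3, some edge is not deletable in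
   a given orientation [o]: [v] has at most one outgoing or at most one
   incoming edge, and deleting it leaves [v] without exit or without entry. *)
Lemma degree3_not_all_deletable o v : (1 < #|V|)%N -> #|incident v| = 3%N ->
  {in incident v, forall e, s e != t e} -> exists e, ~ deletable s t o e.
Proof.
move=> HV Hdeg Hloop; have [u Hu] := other_vertex v HV.
have [e1 _] : exists e1, e1 \in incident v by apply/set0Pn; rewrite -card_gt0 Hdeg.
have at_most_one (S : {set E}) : (#|S| <= 1)%N -> exists e, forall x, x \in S -> x = e.
  case: (set_0Vmem S) => [->|[x Hx]] Hcard; first by exists e1 => y; rewrite inE.
  by exists x => y Hy; apply: (card_le1_eqP Hcard).  
set Out := [set e in incident v | tail o e == v].
set In := [set e in incident v | tail o e != v].
have : (#|Out| + #|In| = 3)%N.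
  rewrite -Hdeg -(cardsID [set e | tail o e == v] (incident v)).
  by congr (_ + _)%N; apply: eq_card => e; rewrite !inE // andbC.
move=> Hsum; have [/at_most_one[e He]|/at_most_one[e He]] :
    (#|Out| <= 1)%N \/ (#|In| <= 1)%N by lia.
- exists e => /(strong_exit Hu)[x]; rewrite !inE => /andP[Hxe _] Hx.
  case/eqP: Hxe; apply: He; rewrite inE Hx andbT.
  by apply: (@oriented_incident o); rewrite Hx.
- exists e => /(strong_entry Hu)/(_ Hloop)[x]; rewrite !inE => /andP[Hxe _].
  move=> /andP[Hh Ht]; case/eqP: Hxe; apply: He.
  by rewrite inE Ht andbT; apply: (@oriented_incident o); rewrite Hh orbT.
Qed.


Lemma degree3_frank_cover_lb v : (1 < #|V|)%N -> #|incident v| = 3%N ->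
  {in incident v, forall e, s e != t e} -> forall k, (k < 2)%N -> ~ frank_cover s t k.
Proof.
move=> HV Hdeg Hloop [|[|//]] _ [os Hcov].
  have [e1 _] : exists e1, e1 \in incident v by apply/set0Pn; rewrite -card_gt0 Hdeg.
  by have [[]] := Hcov e1.
have [e Hnd] := degree3_not_all_deletable (os ord0) HV Hdeg Hloop.
by have [i] := Hcov e; rewrite (ord1 i).
Qed.

Section LooplessGraph.
Hypothesis loopless : forall e, s e != t e.

Lemma boundary_parity o h v : (2 %| boundary o h v - \sum_(e in incident v) h e)%Z.
Proof.
rewrite /boundary [\sum_(e in incident v) _]big_mkcond -sumrB; apply: rpred_sum => e _.
rewrite /incidence /Defs.ohead /otail inE; have := loopless e.
case Hs: (s e == v); case Ht: (t e == v) => /=;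
  try (by move: Hs Ht => /eqP-> /eqP->; rewrite eqxx);
  by case: (o e); rewrite /= ?Hs ?Ht; lia.
Qed.

Section Colouring.
Variable c : E -> 'I_3.
Hypothesis proper : forall e e' : E, e != e' ->
  [|| s e == s e', s e == t e', t e == s e' | t e == t e'] -> c e != c e'.
Hypothesis connected3 : edge_connected s t 3.

Lemma colour_inj v : {in incident v &, injective c}.
Proof.
move=> e e'; rewrite !inE => He He' Hce; apply/eqP/negP => /negP Hne.
have Hadj : [|| s e == s e', s e == t e', t e == s e' | t e == t e'].
  by case/orP: He => /eqP->; case/orP: He' => /eqP->; rewrite eqxx ?orbT.
by have := proper Hne Hadj; rewrite Hce eqxx.
Qed.

Lemma colours_at v : c @: incident v = setT.
Proof.
apply/eqP; rewrite eqEcard subsetT cardsT card_ord card_in_imset ?incident_ge3 //.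
exact: colour_inj.
Qed.

Lemma incident_card3 v : #|incident v| = 3%N.
Proof. by rewrite -(card_in_imset (@colour_inj v)) colours_at cardsT card_ord. Qed.

Lemma colour_class_card (S : {set 'I_3}) v :
  #|[set e in incident v | c e \in S]| = #|S|.
Proof.
rewrite -(card_in_imset (f := c)); last first.
  by move=> e e' /setIdP[He _] /setIdP[He' _]; exact: (colour_inj He He').
apply: eq_card => i; apply/imsetP/idP.
  by case=> e; rewrite inE => /andP[_ H] ->.
have : i \in c @: incident v by rewrite colours_at inE.
by case/imsetP => e He -> Hi; exists e; rewrite // inE He Hi.
Qed.

Lemma colour_classes_even o (S : {set 'I_3}) v : #|S| = 2%N ->
  (2 %| boundary o (fun e => (c e \in S)%:R) v)%Z.
Proof.
move=> HS; have := boundary_parity o (fun e => (c e \in S)%:R) v.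
have -> : \sum_(e in incident v) ((c e \in S)%:R : int) = 2.
  rewrite big_mkcond /= (eq_bigr (fun e => ((e \in incident v) && (c e \in S))%:R)).
    by rewrite sum_indicator_card colour_class_card HS.
  by move=> e _; case: (e \in incident v).
lia.
Qed.


(* Second part, upper bound: colour classes {0,1} and {1,2} are even
   subgraphs, lifted to flows in {-1,0,1} whose supports cover every edge. *)
Lemma colourable_frank_cover : frank_cover s t 2.
Proof.
pose o := fun _ : E => true.
pose SA := [set~ (ord_max : 'I_3)].
pose SB := [set~ (ord0 : 'I_3)].
have [cardA cardB] : #|SA| = 2%N /\ #|SB| = 2%N by rewrite !cardsC1 card_ord.
have [pa [ka [Fa Ba Ka]]] := even_boundary_lift (fun v => colour_classes_even o v cardA).
have [pb [kb [Fb Bb Kb]]] := even_boundary_lift (fun v => colour_classes_even o v cardB).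
apply: (two_unit_flows_frank_cover connected3 Fa Fb Ba Bb) => e.
have := Ka e; have := Kb e; rewrite !inE.
case: (c e =P ord_max) => [->|_] /=; first by lia.
by case: (c e \in SA); lia.
Qed.

End Colouring.
End LooplessGraph.
End Multigraph.

Theorem theorem2 :
  (forall (V E : finType) (s t : E -> V),
     edge_connected s t 3 -> nz_flow s t 4 ->
     exists k, k <= 2 /\ frank_cover s t k) /\
  (forall (V E : finType) (s t : E -> V),
     edge_connected s t 3 -> edge_colourable s t 3 ->
     frank_cover s t 2 /\ forall k, k < 2 -> ~ frank_cover s t k).
Proof.
split=> V E s t Hconn.
  by move=> Hflow; exists 2; split => //; exact: nz4flow_frank_cover.
move=> [c [Hloop Hproper]]; split.
  exact: (colourable_frank_cover Hloop Hproper Hconn).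
have /card_gt0P [v _] := ltnW Hconn.1.
apply: (degree3_frank_cover_lb (v := v) Hconn.1).
  exact: (incident_card3 Hproper Hconn).
by move=> e _; exact: Hloop.
Qed.
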